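(* The functor $A\mapsto A_{halo}$ induces an equivalence of categories between the category of idempotent semirings whose natural order is total (with semiring morphisms) and the category of tropical halos with multiplicative halo morphisms.
   Context: Semirings are commutative and unital. A halo is a semiring with a partial order compatible with its operations ($x\le z,y\le t\Rightarrow xy\le zt,\ x+y\le z+t$); a halo morphism is an increasing map $f$ with $f(0)=0$, $f(1)=1$, $f(a+b)\le f(a)+f(b)$, $f(ab)\le f(a)f(b)$; it is multiplicative if $f(ab)=f(a)f(b)$. A semiring is idempotent if $a+a=a$ for all $a$; its natural order is $a\le b\iff a+b=b$, and $A_{halo}$ denotes $A$ with this order. A halo is tropical if it is not $\{0\}$, its order is total, and $a+b=\max(a,b)$ for all $a,b$. *)

From HB Require Import structures.
From mathcomp Require Import all_boot all_order all_algebra.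
Set Implicit Arguments. Unset Strict Implicit. Unset Printing Implicit Defensive.
Import GRing.Theory.
Local Open Scope ring_scope.

(* Semirings: commutative unital semirings = mathcomp comPzSemiRingType
   (0 = 1 allowed at the level of the type class). *)

Definition is_halo (R : comPzSemiRingType) (le : rel R) : Prop :=
  [/\ (forall x, le x x),
      (forall x y, le x y -> le y x -> x = y),
      (forall x y z, le x y -> le y z -> le x z),
      (forall x y z t, le x z -> le y t -> le (x * y) (z * t)) &
      (forall x y z t, le x z -> le y t -> le (x + y) (z + t))].

Definition halo_morphism (R S : comPzSemiRingType) (leR : rel R) (leS : rel S)
    (f : R -> S) : Prop :=
  [/\ (forall x y, leR x y -> leS (f x) (f y)),
      f 0 = 0, f 1 = 1,
      (forall a b, leS (f (a + b)) (f a + f b)) &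
      (forall a b, leS (f (a * b)) (f a * f b))].

Definition multiplicative_map (R S : comPzSemiRingType) (f : R -> S) : Prop :=
  forall a b, f (a * b) = f a * f b.

Definition multiplicative_halo_morphism (R S : comPzSemiRingType)
    (leR : rel R) (leS : rel S) (f : R -> S) : Prop :=
  halo_morphism leR leS f /\ multiplicative_map f.

Definition semiring_morphism (R S : comPzSemiRingType) (f : R -> S) : Prop :=
  [/\ f 0 = 0, f 1 = 1,
      (forall a b, f (a + b) = f a + f b) &
      (forall a b, f (a * b) = f a * f b)].

Definition idempotent_semiring (R : comPzSemiRingType) : Prop :=
  forall a : R, a + a = a.

(* Natural order a <= b iff a + b = b; A_halo is A with this order. *)
Definition nat_le (R : comPzSemiRingType) : rel R := fun a b => a + b == b.

Definition total_rel (T : Type) (le : rel T) : Prop :=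
  forall a b, le a b || le b a.

Definition nonzero_carrier (R : comPzSemiRingType) : Prop :=
  exists x : R, x != 0.

Definition idem_total_semiring (R : comPzSemiRingType) : Prop :=
  [/\ nonzero_carrier R, idempotent_semiring R & total_rel (@nat_le R)].

Definition tropical_halo (R : comPzSemiRingType) (le : rel R) : Prop :=
  [/\ is_halo le, nonzero_carrier R, total_rel le &
      (forall a b : R, a + b = (if le a b then b else a))].

From HB Require Import structures.
From mathcomp Require Import all_boot all_order all_algebra.
Set Implicit Arguments. Unset Strict Implicit. Unset Printing Implicit Defensive.
Import GRing.Theory.
Local Open Scope ring_scope.

(* In an idempotent semiring the natural order is a compatible partial order in
   which [a + b] is the least upper bound of [a] and [b], hence [max a b] when
   the order is total.  A monotone, sub-additive map between such semirings is
   additive: [f (a + b)] bounds [f a] and [f b], so it also bounds their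
   supremum [f a + f b].  Conversely, in a tropical halo [a + b = max a b]
   forces the natural order to coincide with the given one, so the identity
   map witnesses essential surjectivity. *)

Section NaturalOrder.

Variable A : comPzSemiRingType.
Hypothesis idA : idempotent_semiring A.

Lemma nat_le_refl (x : A) : nat_le x x.
Proof. by rewrite /nat_le idA. Qed.

Lemma nat_le_anti (x y : A) : nat_le x y -> nat_le y x -> x = y.
Proof. by move=> /eqP xy /eqP yx; rewrite -xy -{1}yx addrC. Qed.

Lemma nat_le_trans (x y z : A) : nat_le x y -> nat_le y z -> nat_le x z.
Proof. by move=> /eqP xy /eqP yz; apply/eqP; rewrite -yz addrA xy. Qed.

Lemma nat_le_add (x y z t : A) :
  nat_le x z -> nat_le y t -> nat_le (x + y) (z + t).
Proof. by move=> /eqP xz /eqP yt; apply/eqP; rewrite addrACA xz yt. Qed.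

Lemma nat_le_mul (x y z t : A) :
  nat_le x z -> nat_le y t -> nat_le (x * y) (z * t).
Proof.
move=> /eqP xz /eqP yt; apply/eqP.
by rewrite -xz -yt !mulrDl !mulrDr !addrA idA.
Qed.

Lemma nat_le_addl (a b : A) : nat_le a (a + b).
Proof. by rewrite /nat_le addrA idA. Qed.

Lemma nat_le_addr (a b : A) : nat_le b (a + b).
Proof. by rewrite addrC nat_le_addl. Qed.

Lemma nat_le_add_lub (x y z : A) :
  nat_le x z -> nat_le y z -> nat_le (x + y) z.
Proof. by move=> xz yz; rewrite -(idA z); apply: nat_le_add. Qed.

Lemma nat_le_is_halo : is_halo (@nat_le A).
Proof.
split; [exact: nat_le_refl | exact: nat_le_anti | exact: nat_le_trans |
        exact: nat_le_mul | exact: nat_le_add].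
Qed.

Lemma addr_max : total_rel (@nat_le A) ->
  forall a b : A, a + b = (if nat_le a b then b else a).
Proof.
move=> tot a b; case: ifP => [/eqP // | ab].
by move: (tot a b); rewrite ab /= /nat_le addrC => /eqP.
Qed.

End NaturalOrder.

Lemma idem_total_tropical (A : comPzSemiRingType) :
  idem_total_semiring A -> tropical_halo (@nat_le A).
Proof. by case=> nzA idA totA; split; [exact: nat_le_is_halo | | | exact: addr_max]. Qed.

Lemma additive_nat_le_homo (A B : comPzSemiRingType) (f : A -> B) :
  (forall a b, f (a + b) = f a + f b) ->
  forall x y, nat_le x y -> nat_le (f x) (f y).
Proof. by move=> fD x y /eqP xy; rewrite /nat_le -fD xy. Qed.

Lemma semiring_morphism_halo (A B : comPzSemiRingType) (f : A -> B) :
  idempotent_semiring B -> semiring_morphism f ->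
  multiplicative_halo_morphism (@nat_le A) (@nat_le B) f.
Proof.
move=> idB [f0 f1 fD fM]; split => //; split => //.
- exact: additive_nat_le_homo.
- by move=> a b; rewrite fD nat_le_refl.
- by move=> a b; rewrite fM nat_le_refl.
Qed.

Lemma halo_morphism_additive (A B : comPzSemiRingType) (f : A -> B) :
  idempotent_semiring A -> idempotent_semiring B ->
  halo_morphism (@nat_le A) (@nat_le B) f ->
  forall a b, f (a + b) = f a + f b.
Proof.
move=> idA idB [fmono _ _ fD _] a b; apply: nat_le_anti => //.
by apply: nat_le_add_lub => //; apply: fmono; [exact: nat_le_addl | exact: nat_le_addr].
Qed.

Lemma multiplicative_halo_morphism_semiring (A B : comPzSemiRingType) (f : A -> B) :
  idempotent_semiring A -> idempotent_semiring B ->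
  multiplicative_halo_morphism (@nat_le A) (@nat_le B) f -> semiring_morphism f.
Proof.
move=> idA idB [fhalo fM]; have fD := halo_morphism_additive idA idB fhalo.
by case: fhalo => _ f0 f1 _ _; split.
Qed.

Section TropicalHalo.

Variables (H : comPzSemiRingType) (le : rel H).
Hypothesis tropH : tropical_halo le.

Lemma tropical_idempotent : idempotent_semiring H.
Proof. by case: tropH => _ _ _ hadd a; rewrite hadd; case: ifP. Qed.

Lemma tropical_nat_le : @nat_le H =2 le.
Proof.
case: tropH => -[lrefl _ _ _ _] _ _ hadd x y; rewrite /nat_le hadd.
case: ifP => [_ | nxy]; first by rewrite eqxx.
by apply/eqP => exy; rewrite exy lrefl in nxy.
Qed.

Lemma tropical_idem_total : idem_total_semiring H.
Proof.
case: tropH => _ nzH tot _; split => //; first exact: tropical_idempotent.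
by move=> a b; rewrite !tropical_nat_le.
Qed.

End TropicalHalo.

Lemma id_multiplicative_halo_morphism (R : comPzSemiRingType) (le le' : rel R) :
  reflexive le' -> subrel le le' -> multiplicative_halo_morphism le le' id.
Proof. by move=> refl' sub; split => //; split. Qed.

Theorem lemma1p21 :
  (forall A : comPzSemiRingType,
      idem_total_semiring A -> tropical_halo (@nat_le A))
  /\
  (forall (A B : comPzSemiRingType) (f : A -> B),
      idem_total_semiring A -> idem_total_semiring B ->
      (semiring_morphism f <->
       multiplicative_halo_morphism (@nat_le A) (@nat_le B) f))
  /\
  (forall (H : comPzSemiRingType) (le : rel H),
      tropical_halo le ->
      exists (A : comPzSemiRingType) (f : A -> H) (g : H -> A),
        [/\ idem_total_semiring A,
            multiplicative_halo_morphism (@nat_le A) le f,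
            multiplicative_halo_morphism le (@nat_le A) g,
            (forall x, g (f x) = x) &
            (forall y, f (g y) = y)]).
Proof.
split; [exact: idem_total_tropical | split].
- move=> A B f [_ idA _] [_ idB _]; split.
  + exact: semiring_morphism_halo.
  + exact: multiplicative_halo_morphism_semiring.
- move=> H le tropH; have leE := tropical_nat_le tropH.
  have lrefl : reflexive le by case: tropH => -[].
  exists H, id, id; split => //.
  + exact: tropical_idem_total tropH.
  + by apply: id_multiplicative_halo_morphism => // x y; rewrite leE.
  + by apply: id_multiplicative_halo_morphism => [x | x y]; rewrite leE ?lrefl.
Qed.
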